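(* Let $G$ be a persistent graph with vertex order $<$. If four vertices $p_1,p_2,p_3,p_4$ of $G$ form an induced $4$-cycle in this order (edges $\{p_1,p_2\},\{p_2,p_3\},\{p_3,p_4\},\{p_4,p_1\}$ and no others among them), then the two leftmost (with respect to $<$) of these four vertices are either $p_1$ and $p_3$, or $p_2$ and $p_4$.
   Context: A persistent graph is a graph $G$ together with a linear order $v_1<v_2<\dots<v_n$ on $V(G)$ such that (1) $\{v_i,v_{i+1}\}\in E(G)$ for all $i$; (2) X-property: for all $p<q<r<s$, if $\{p,r\}\in E(G)$ and $\{q,s\}\in E(G)$ then $\{p,s\}\in E(G)$; (3) bar-property: if $\{p,q\}\in E(G)$ and $p,q$ are not consecutive in the order, then there is a vertex $r$ with $p<r<q$ adjacent to both $p$ and $q$. *)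

From mathcomp Require Import all_boot all_order.
Set Implicit Arguments. Unset Strict Implicit. Unset Printing Implicit Defensive.

(* A finite simple graph on vertex set 'I_n, whose vertices are listed in the
   linear order v_0 < v_1 < ... < v_(n-1) (the natural order on 'I_n). *)
Definition simple_graph (n : nat) (e : rel 'I_n) : Prop :=
  (forall x y, e x y = e y x) /\ (forall x, ~~ e x x).

Definition persistent (n : nat) (e : rel 'I_n) : Prop :=
  simple_graph e /\
  (forall x y : 'I_n, val y = (val x).+1 -> e x y) /\
  (forall p q r s : 'I_n, p < q -> q < r -> r < s ->
      e p r -> e q s -> e p s) /\
  (forall p q : 'I_n, p < q -> e p q -> val q <> (val p).+1 ->
      exists r : 'I_n, [/\ p < r, r < q, e p r & e r q]).

Definition induced_C4 (n : nat) (e : rel 'I_n) (p1 p2 p3 p4 : 'I_n) : Prop :=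
  uniq [:: p1; p2; p3; p4] /\
  e p1 p2 /\ e p2 p3 /\ e p3 p4 /\ e p4 p1 /\
  ~~ e p1 p3 /\ ~~ e p2 p4.

(* The X-property forbids a "crossing" pattern p < q < r < s with edges pr, qs
   but no edge ps.  If the leftmost vertex a of the 4-cycle a b c d were not
   followed by its opposite vertex c, the four vertices would either cross
   (which the X-property rules out directly) or appear in the cyclic order
   a < b < c < d up to reflection.  The latter is impossible too: let m be the
   first neighbour of a to the right of b.  Iterating the bar-property shows that
   consecutive right neighbours of a vertex are adjacent, so bm is an edge, and
   the X-property then produces one of the missing chords ac or bd. *)

From mathcomp Require Import all_boot all_order.
From mathcomp Require Import zify.
Set Implicit Arguments. Unset Strict Implicit. Unset Printing Implicit Defensive.

Section PersistentGraph.

Variables (n : nat) (e : rel 'I_n).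

Hypothesis e_sym : symmetric e.

Hypothesis X_property : forall p q r s : 'I_n, p < q -> q < r -> r < s ->
  e p r -> e q s -> e p s.

Hypothesis bar_property : forall p q : 'I_n, p < q -> e p q ->
  val q <> (val p).+1 -> exists r : 'I_n, [/\ p < r, r < q, e p r & e r q].

Definition no_nbr_between (p a b : 'I_n) : Prop :=
  forall x : 'I_n, a < x -> x < b -> ~~ e p x.

(* Each bar vertex q' of an edge qs stays left of r: otherwise the X-property
   applied to p < q < r < q' gives p a neighbour in the gap (r, s). *)
Lemma gap_edge (p q r s : 'I_n) : p < q -> q <= r -> r < s ->
  e p r -> e q s -> no_nbr_between p r s -> e r s.
Proof.
move=> pq qr rs epr + gap.
have [k] := ubnP (r - q); elim: k q pq qr => // k IH q pq qr lt_rq_k eqs.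
case: (ltngtP q r) => [lt_qr|rq|/val_inj <- //]; last by lia.
have far_qs : (s : nat) <> q.+1 by lia.
have [q' [qq' q's eqq' eq's]] := bar_property (ltn_trans lt_qr rs) eqs far_qs.
have q'r : q' <= r.
  rewrite leqNgt; apply/negP => rq'.
  by move: (gap q' rq' q's); rewrite (X_property pq lt_qr rq' epr eqq').
by apply: (IH q') => //; lia.
Qed.

Lemma nbr_gap_edge (p r s : 'I_n) : p < r -> r < s ->
  e p r -> e p s -> no_nbr_between p r s -> e r s.
Proof.
move=> pr rs epr eps gap.
have far_ps : (s : nat) <> p.+1 by lia.
have [q [pq qs epq eqs]] := bar_property (ltn_trans pr rs) eps far_ps.
apply: (gap_edge pq _ rs epr eqs gap).
by rewrite leqNgt; apply/negP => rq; move: (gap q rq qs); rewrite epq.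
Qed.

Lemma exists_first_nbr (p a b : 'I_n) : a < b -> e p b ->
  exists m : 'I_n, [/\ a < m, m <= b, e p m & no_nbr_between p a m].
Proof.
move=> ab epb.
have first_nbr : (a < b) && e p b by rewrite ab.
have [m /andP[am epm] min_m] :=
  arg_minnP (@nat_of_ord n) (P := [pred x : 'I_n | (a < x) && e p x]) first_nbr.
exists m; split=> //; first by apply: min_m; rewrite /= ab.
move=> x ax xm; apply: contraTN xm => epx.
by rewrite -leqNgt; apply: min_m; rewrite /= ax epx.
Qed.

Lemma ordered_C4_chord (a b c d : 'I_n) : a < b -> b < c -> c < d ->
  e a b -> e b c -> e c d -> e a d -> e a c || e b d.
Proof.
move=> ab bc cd eab ebc ecd ead.
have [m [bm md eam gap]] := exists_first_nbr (ltn_trans bc cd) ead.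
case: (ltngtP m c) => [mc|cm|/val_inj <-]; last by rewrite eam.
  by rewrite (X_property ab bm mc eam ebc).
have ebm := nbr_gap_edge ab bm eab eam gap.
case: (ltngtP m d) => [lt_md|dm|/val_inj <-]; last by rewrite ebm orbT.
  by rewrite (X_property bc cm lt_md ebm ecd) orbT.
by lia.
Qed.

Lemma induced_C4_rot (a b c d : 'I_n) :
  induced_C4 e a b c d -> induced_C4 e b c d a.
Proof.
move=> [uniq_abcd [eab [ebc [ecd [eda [nac nbd]]]]]].
split; first by rewrite -(rot_uniq 1) in uniq_abcd.
by do !split=> //; rewrite e_sym.
Qed.

Lemma induced_C4_opposite_first (a b c d : 'I_n) : induced_C4 e a b c d ->
  a <= b -> a <= d -> maxn a c < minn b d.
Proof.
move=> [uniq_abcd [eab [ebc [ecd [eda [nac nbd]]]]]] ab ad.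
move: uniq_abcd; rewrite /= !inE -!val_eqE /= => distinct.
have [lt_ab lt_ad] : a < b /\ a < d by lia.
suff [cb cd] : c < b /\ c < d by lia.
have [ca|ac] := ltnP c a; first by lia.
have [ead edc ecb] : [/\ e a d, e d c & e c b] by split; rewrite e_sym.
have no_chord : ~~ (e a c || e b d) by rewrite negb_or nac.
have [cb|bc] := ltnP c b; have [cd|dc] := ltnP c d => //.
all: exfalso; move/negP: no_chord; apply.
- have lt_dc : d < c by lia.
  by rewrite (e_sym b); apply: ordered_C4_chord lt_ad lt_dc cb ead edc ecb eab.
- have lt_bc : b < c by lia.
  exact: ordered_C4_chord lt_ab lt_bc cd eab ebc ecd ead.
- have [lt_bc lt_dc] : b < c /\ d < c by lia.
  have [lt_bd|lt_db] : b < d \/ d < b by lia.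
    by rewrite (X_property lt_ab lt_bd lt_dc ead ebc).
  by rewrite (X_property lt_ad lt_db lt_bc eab edc).
Qed.

End PersistentGraph.

Theorem mainTheorem5 (n : nat) (e : rel 'I_n) (p1 p2 p3 p4 : 'I_n) :
  persistent e -> induced_C4 e p1 p2 p3 p4 ->
  (maxn p1 p3 < minn p2 p4)%N \/ (maxn p2 p4 < minn p1 p3)%N.
Proof.
move=> [[e_sym _] [_ [X_prop bar_prop]]] C4_1.
have opp := induced_C4_opposite_first e_sym X_prop bar_prop.
have C4_2 := induced_C4_rot e_sym C4_1.
have C4_3 := induced_C4_rot e_sym C4_2.
have C4_4 := induced_C4_rot e_sym C4_3.
have [l12|/ltnW l21] := leqP p1 p2.
  have [l14|/ltnW l41] := leqP p1 p4; first by left; apply: opp C4_1 l12 l14.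
  have [l43|/ltnW l34] := leqP p4 p3.
    by right; rewrite maxnC; apply: opp C4_4 l41 l43.
  by left; rewrite maxnC minnC; apply: opp C4_3 l34 (leq_trans l34 (leq_trans l41 l12)).
have [l23|/ltnW l32] := leqP p2 p3.
  by right; rewrite minnC; apply: opp C4_2 l23 l21.
have [l34|/ltnW l43] := leqP p3 p4.
  by left; rewrite maxnC minnC; apply: opp C4_3 l34 l32.
by right; rewrite maxnC; apply: opp C4_4 (leq_trans l43 (leq_trans l32 l21)) l43.
Qed.
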